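(* Let $f\colon X\to X$ be a piecewise $\lambda$-contraction and $x_0\in X$. If $\Omega(f)\cap S(f)=\emptyset$, then $f$ is asymptotically periodic on $Z(f)$.
   Context: $(X,d)$ is a compact metric space whose open balls are connected, with $\mathrm{diam}(X)>0$, and $\lambda\in(0,1)$. A piecewise $\lambda$-contraction $f$: there exist $N\in\mathbb{N}$, open connected pairwise disjoint $A_1,\dots,A_N\subset X$ with dense union $X'$, and bi-Lipschitz $\varphi_i\colon X\to X$ with Lipschitz constant $\le\lambda$, $f|_{A_i}=\varphi_i|_{A_i}$; $S(f)=X\setminus X'$. $x$ is regular of order $n$ if $f^j(x)\notin S(f)$ for $0\le j<n$, regular if for all $n$; $Z(f)$ is the set of regular points. $\mathcal{I}_n(f)$ is the set of tuples $(i_0,\dots,i_{n-1})$ such that some regular point $x$ of order $n$ has $f^j(x)\in A_{i_j}$ for $0\le j<n$. For $\alpha=(i_0,\dots,i_{n-1})$, $\varphi^\alpha=\varphi_{i_{n-1}}\circ\cdots\circ\varphi_{i_0}$ and $\Omega(f)=\bigcap_{m\ge1}\overline{\bigcup_{n\ge m}\{\varphi^\alpha(x_0):\alpha\in\mathcal{I}_n(f)\}}$. $f$ is asymptotically periodic on $Y$ if $\bigcup_{x\in Y}\omega(f,x)$ is a union of finitely many periodic orbits, where $\omega(f,x)=\bigcap_{m\ge1}\overline{\bigcup_{n\ge m}\{f^n(x)\}}$. *)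

From Stdlib Require Import Reals List Arith.
Open Scope R_scope.

Section Metric.
Context {X : Type} (d : X -> X -> R).

Definition is_metric : Prop :=
  (forall x y, 0 <= d x y) /\ (forall x y, d x y = 0 <-> x = y) /\
  (forall x y, d x y = d y x) /\ (forall x y z, d x z <= d x y + d y z).

Definition ball (x : X) (r : R) : X -> Prop := fun y => d x y < r.

Definition is_open (U : X -> Prop) : Prop :=
  forall x, U x -> exists r, 0 < r /\ forall y, ball x r y -> U y.

Definition closure (A : X -> Prop) : X -> Prop :=
  fun x => forall r, 0 < r -> exists y, A y /\ d x y < r.

Definition dense (A : X -> Prop) : Prop := forall x, closure A x.

Definition connected (U : X -> Prop) : Prop :=
  forall V W : X -> Prop, is_open V -> is_open W ->
    (forall x, U x -> V x \/ W x) ->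
    (exists x, U x /\ V x) -> (exists x, U x /\ W x) ->
    exists x, U x /\ V x /\ W x.

Definition compact_space : Prop :=
  forall (I : Type) (U : I -> X -> Prop), (forall i, is_open (U i)) ->
    (forall x, exists i, U i x) ->
    exists l : list I, forall x, exists i, In i l /\ U i x.

Definition diam_pos : Prop := exists x y, 0 < d x y.

Definition bilip_contr (lam : R) (phi : X -> X) : Prop :=
  (forall x y, d (phi x) (phi y) <= lam * d x y) /\
  exists c, 0 < c /\ forall x y, c * d x y <= d (phi x) (phi y).

(* (N, A, phi) witness that f is a piecewise lam-contraction;
   the pieces are A 0, ..., A (N-1) (paper: A_1, ..., A_N). *)
Definition piecewise_contraction (lam : R) (f : X -> X) (N : nat)
  (A : nat -> X -> Prop) (phi : nat -> X -> X) : Prop :=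
  (forall i, (i < N)%nat -> is_open (A i) /\ connected (A i)) /\
  (forall i j x, (i < N)%nat -> (j < N)%nat -> i <> j -> A i x -> A j x -> False) /\
  dense (fun x => exists i, (i < N)%nat /\ A i x) /\
  (forall i, (i < N)%nat -> bilip_contr lam (phi i)) /\
  (forall i x, (i < N)%nat -> A i x -> f x = phi i x).

End Metric.

Section Dyn.
Context {X : Type} (d : X -> X -> R) (f : X -> X) (N : nat)
  (A : nat -> X -> Prop) (phi : nat -> X -> X).

Definition Xprime : X -> Prop := fun x => exists i, (i < N)%nat /\ A i x.
Definition Sf : X -> Prop := fun x => ~ Xprime x.

Definition regular_order (n : nat) (x : X) : Prop :=
  forall j, (j < n)%nat -> ~ Sf (Nat.iter j f x).
Definition Zf : X -> Prop := fun x => forall n, regular_order n x.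

(* I_n(f): admissible itineraries of length n, as lists [i_0; ...; i_{n-1}] *)
Definition In_f (n : nat) (alpha : list nat) : Prop :=
  length alpha = n /\
  exists x, regular_order n x /\
    forall j, (j < n)%nat -> (nth j alpha 0%nat < N)%nat /\ A (nth j alpha 0%nat) (Nat.iter j f x).

(* phi^alpha = phi_{i_{n-1}} o ... o phi_{i_0} *)
Definition phi_alpha (alpha : list nat) (x : X) : X :=
  fold_left (fun y i => phi i y) alpha x.

Definition Omega (x0 : X) : X -> Prop :=
  fun y => forall m : nat, closure d
    (fun z => exists n alpha, (m <= n)%nat /\ In_f n alpha /\ z = phi_alpha alpha x0) y.

Definition omega_lim (x : X) : X -> Prop :=
  fun y => forall m : nat, closure d (fun z => exists n, (m <= n)%nat /\ z = Nat.iter n f x) y.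

Definition asymptotically_periodic_on (Y : X -> Prop) : Prop :=
  exists ps : list X,
    (forall p, In p ps -> exists q, (1 <= q)%nat /\ Nat.iter q f p = p) /\
    forall y, (exists x, Y x /\ omega_lim x y) <->
              (exists p k, In p ps /\ y = Nat.iter k f p).

End Dyn.

From Stdlib Require Import Reals List Lra Lia Classical.
Open Scope R_scope.

(* Ω is compact and misses S(f), so by the Lebesgue number lemma there is r > 0
   such that every r-ball centred in Ω lies in a single piece A_i.  Ω is then
   f-invariant (a point φ^α(x0) near y ∈ Ω is within λ^n diam X of an orbit
   point f^n(x), which is forced into the piece of y), and on r-balls centred in
   Ω each iterate f^j is a λ^j-contraction.  The orbit of a regular point x
   accumulates at some y ∈ Ω; recurrence of the orbit of y gives c = f^j(y) with
   d(c, f^p(c)) < (1 - λ) r, so the contraction f^p has a fixed point q ∈ Ω near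
   c, and the orbit of x is asymptotic to the periodic orbit of q.  Two periodic
   points of Ω at distance < r coincide, hence by compactness there are only
   finitely many of them. *)

Lemma pow_antimono (a : R) (m n : nat) : 0 <= a <= 1 -> (m <= n)%nat -> a ^ n <= a ^ m.
Proof.
  intros Ha Hmn. replace n with (m + (n - m))%nat by lia. rewrite pow_add.
  assert (a ^ (n - m) <= 1) by (rewrite <- (pow1 (n - m)); apply pow_incr; lra).
  pose proof (pow_le a m ltac:(lra)). nra.
Qed.

Lemma pow_mul_eventually_lt (a C eps : R) : 0 <= a < 1 -> 0 <= C -> 0 < eps ->
  exists n0, forall n, (n0 <= n)%nat -> a ^ n * C < eps.
Proof.
  intros Ha HC He.
  destruct (pow_lt_1_zero a ltac:(rewrite Rabs_pos_eq; lra) (eps / (C + 1))) as [n0 Hn0].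
  { apply Rdiv_lt_0_compat; lra. }
  exists n0. intros n Hn. specialize (Hn0 n Hn).
  rewrite Rabs_pos_eq in Hn0 by (apply pow_le; lra).
  apply (Rmult_lt_compat_r (C + 1)) in Hn0; [|lra].
  replace (eps / (C + 1) * (C + 1)) with eps in Hn0 by (field; lra).
  pose proof (pow_le a n ltac:(lra)). nra.
Qed.

Lemma finite_positive_min (g : nat -> R) (p : nat) : (forall k, (k < p)%nat -> 0 < g k) ->
  exists m, 0 < m /\ forall k, (k < p)%nat -> m <= g k.
Proof.
  induction p as [|p IH]; intros Hg.
  - exists 1. split; [lra | intros; lia].
  - destruct IH as [m [Hm Hmin]]; [intros k Hk; apply Hg; lia|].
    exists (Rmin m (g p)). split; [apply Rmin_pos; auto|].
    intros k Hk. destruct (Nat.eq_dec k p) as [->|Hne]; [apply Rmin_r|].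
    eapply Rle_trans; [apply Rmin_l | apply Hmin; lia].
Qed.

Section CompactMetric.
Variables (X : Type) (d : X -> X -> R).
Hypothesis Hmetric : is_metric d.
Hypothesis Hcompact : compact_space d.

Lemma dist_ge0 x y : 0 <= d x y.
Proof. destruct Hmetric as (H & _). apply H. Qed.

Lemma dist_eq0 x y : d x y = 0 -> x = y.
Proof. destruct Hmetric as (_ & H & _). apply H. Qed.

Lemma dist_xx x : d x x = 0.
Proof. destruct Hmetric as (_ & H & _). apply H. reflexivity. Qed.

Lemma dist_sym x y : d x y = d y x.
Proof. destruct Hmetric as (_ & _ & H & _). apply H. Qed.

Lemma dist_triangle x y z : d x z <= d x y + d y z.
Proof. destruct Hmetric as (_ & _ & _ & H). apply H. Qed.

Definition cluster_point (s : nat -> X) (q : X) : Prop :=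
  forall eps, 0 < eps -> forall K, exists j, (K <= j)%nat /\ d q (s j) < eps.

Lemma compact_increasing_cover (P : nat -> X -> Prop) :
  (forall k k' x, (k <= k')%nat -> P k x -> P k' x) ->
  (forall x, exists k rho, 0 < rho /\ forall y, d x y < rho -> P k y) ->
  exists K, forall y, P K y.
Proof.
  intros Hmono Hloc.
  destruct (Hcompact nat (fun k x => exists rho, 0 < rho /\ forall y, d x y < rho -> P k y))
    as [l Hl].
  - intros k x [rho [Hrho H]]. exists (rho / 2). split; [lra|].
    intros y Hy. exists (rho / 2). split; [lra|]. intros z Hz. apply H.
    unfold ball in Hy. pose proof (dist_triangle x y z). lra.
  - intros x. destruct (Hloc x) as [k Hk]. exists k. exact Hk.
  - exists (list_max l). intros y. destruct (Hl y) as [i [Hi [rho [Hrho H]]]].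
    apply Hmono with i.
    + assert (Hall : Forall (fun k => (k <= list_max l)%nat) l) by (apply list_max_le; lia).
      rewrite Forall_forall in Hall. auto.
    + apply H. rewrite dist_xx. exact Hrho.
Qed.

Lemma compact_cluster_point (s : nat -> X) : exists q, cluster_point s q.
Proof.
  apply NNPP; intro Hnone.
  assert (Hfar : forall x, exists eps K, 0 < eps /\ forall j, (K <= j)%nat -> eps <= d x (s j)).
  { intro x. apply NNPP; intro H1. apply Hnone. exists x. intros eps He K.
    apply NNPP; intro H2. apply H1. exists eps, K. split; auto. intros j Hj.
    apply Rnot_lt_le. intro H3. apply H2. eauto. }
  destruct (compact_increasing_cover
              (fun k y => forall j, (k <= j)%nat -> (/ 2) ^ k <= d y (s j))) as [K HK].
  - intros k k' y Hk H j Hj.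
    eapply Rle_trans; [apply pow_antimono; [lra | exact Hk] | apply H; lia].
  - intros x. destruct (Hfar x) as [eps [K [He H]]].
    destruct (pow_mul_eventually_lt (/ 2) 1 (eps / 2)) as [n0 Hn0]; try lra.
    exists (max K n0), (eps / 2). split; [lra|]. intros y Hy j Hj.
    specialize (H j ltac:(lia)). specialize (Hn0 (max K n0) ltac:(lia)).
    pose proof (dist_triangle x y (s j)). lra.
  - specialize (HK (s K) K (le_n _)). rewrite dist_xx in HK.
    pose proof (pow_lt (/ 2) K ltac:(lra)). lra.
Qed.

Lemma compact_bounded (x0 : X) : exists D, forall x, d x x0 <= D.
Proof.
  destruct (compact_increasing_cover (fun k y => d y x0 <= INR k)) as [K HK].
  - intros k k' y Hk H. pose proof (le_INR k k' Hk). lra.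
  - intros x. destruct (INR_unbounded (d x x0 + 1)) as [k Hk].
    exists k, 1. split; [lra|]. intros y Hy.
    pose proof (dist_triangle y x x0). rewrite (dist_sym y x) in H. lra.
  - exists (INR K). exact HK.
Qed.

Lemma compact_finite_net (eps : R) : 0 < eps ->
  exists l : list X, forall x, exists c, In c l /\ d c x < eps.
Proof.
  intros He. destruct (Hcompact X (fun c => ball d c eps)) as [l Hl].
  - intros c y Hy. exists (eps - d c y). unfold ball in *. split; [lra|].
    intros z Hz. pose proof (dist_triangle c y z). lra.
  - intros x. exists x. unfold ball. rewrite dist_xx. exact He.
  - exists l. exact Hl.
Qed.

Lemma finite_of_separated (G : X -> Prop) (r : R) : 0 < r ->
  (forall q1 q2, G q1 -> G q2 -> d q1 q2 < r -> q1 = q2) ->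
  exists ps, (forall p, In p ps -> G p) /\ (forall q, G q -> In q ps).
Proof.
  intros Hr Hsep. destruct (compact_finite_net (r / 2) ltac:(lra)) as [net Hnet].
  assert (Hcover : forall l : list X, exists ps, (forall p, In p ps -> G p) /\
            forall q, G q -> (exists c, In c l /\ d c q < r / 2) -> In q ps).
  { induction l as [|c l [ps [HpsG Hps]]].
    - exists nil. split; [intros p []|]. intros q _ [c [[] _]].
    - destruct (classic (exists q, G q /\ d c q < r / 2)) as [[q0 [Gq0 Hq0]]|Hnone].
      + exists (q0 :: ps). split; [intros p [<-|Hp]; auto|].
        intros q Gq [c' [[<-|Hc'] Hc'q]]; [left | right; eauto].
        apply Hsep; auto. pose proof (dist_triangle q0 c q). rewrite (dist_sym q0 c) in H. lra.
      + exists ps. split; auto.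
        intros q Gq [c' [[<-|Hc'] Hc'q]]; [exfalso; eauto | eauto]. }
  destruct (Hcover net) as [ps [HpsG Hps]]. exists ps. split; auto.
Qed.

Lemma cluster_point_closed (K : X -> Prop) (s : nat -> X) (q : X) :
  is_open d (fun x => ~ K x) -> (forall k, K (s k)) -> cluster_point s q -> K q.
Proof.
  intros HK Hs Hq. apply NNPP; intro Hnq.
  destruct (HK q Hnq) as [rho [Hrho Hball]].
  destruct (Hq rho Hrho 0%nat) as [j [_ Hj]]. exact (Hball (s j) Hj (Hs j)).
Qed.

Lemma closures_cap_closed (B : nat -> X -> Prop) :
  is_open d (fun x => ~ forall m, closure d (B m) x).
Proof.
  intros x Hx. apply not_all_ex_not in Hx as [m Hm].
  apply not_all_ex_not in Hm as [r0 Hr0]. apply imply_to_and in Hr0 as [Hr0 Hfar].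
  exists (r0 / 2). split; [lra|]. intros y Hy Hclos.
  destruct (Hclos m (r0 / 2) ltac:(lra)) as [z [Hz Hyz]].
  apply Hfar. exists z. split; auto. unfold ball in Hy. pose proof (dist_triangle x y z). lra.
Qed.

Lemma lebesgue_number (K : X -> Prop) (U : nat -> X -> Prop) :
  is_open d (fun x => ~ K x) -> (forall i, is_open d (U i)) ->
  (forall x, K x -> exists i, U i x) ->
  exists r, 0 < r /\ forall y, K y -> exists i, forall z, d y z < r -> U i z.
Proof.
  intros HK HU Hcov.
  destruct (compact_increasing_cover
              (fun k y => K y -> exists i, forall z, d y z < (/ 2) ^ k -> U i z)) as [k Hk].
  - intros k k' y Hkk' H Hy. destruct (H Hy) as [i Hi]. exists i. intros z Hz.
    apply Hi. pose proof (pow_antimono (/ 2) k k' ltac:(lra) Hkk'). lra.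
  - intros x. destruct (classic (K x)) as [Hx|Hx].
    + destruct (Hcov x Hx) as [i Hi]. destruct (HU i x Hi) as [rho [Hrho Hball]].
      destruct (pow_mul_eventually_lt (/ 2) 1 (rho / 2)) as [k Hk]; try lra.
      exists k, (rho / 2). split; [lra|]. intros y Hy _. exists i. intros z Hz.
      apply Hball. unfold ball. specialize (Hk k (le_n _)).
      pose proof (dist_triangle x y z). lra.
    + destruct (HK x Hx) as [rho [Hrho Hball]].
      exists 0%nat, rho. split; auto. intros y Hy HKy. exfalso. exact (Hball y Hy HKy).
  - exists ((/ 2) ^ k). split; [apply pow_lt; lra | exact Hk].
Qed.

Lemma compact_recurrence (s : nat -> X) (eps : R) : 0 < eps ->
  exists j p, (1 <= p)%nat /\ d (s j) (s (j + p)%nat) < eps.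
Proof.
  intros He. destruct (compact_cluster_point s) as [q Hq].
  destruct (Hq (eps / 2) ltac:(lra) 0%nat) as [j1 [_ H1]].
  destruct (Hq (eps / 2) ltac:(lra) (S j1)) as [j2 [Hj H2]].
  exists j1, (j2 - j1)%nat. split; [lia|]. replace (j1 + (j2 - j1))%nat with j2 by lia.
  pose proof (dist_triangle (s j1) q (s j2)). rewrite (dist_sym (s j1) q) in H. lra.
Qed.

Section LocalContraction.
Variables (K : X -> Prop) (g : X -> X) (kappa r : R).
Hypothesis Hkappa : 0 <= kappa < 1.
Hypothesis Hinv : forall y, K y -> K (g y).
Hypothesis Hcontr : forall y z, K y -> d y z < r -> d (g y) (g z) <= kappa * d y z.

Lemma local_contraction_orbit_bounded c : K c -> d c (g c) < (1 - kappa) * r ->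
  forall k, d c (Nat.iter k g c) <= d c (g c) / (1 - kappa).
Proof.
  intros Hc Hdel. set (del := d c (g c)) in *. set (B := del / (1 - kappa)).
  assert (Hdel0 : 0 <= del) by apply dist_ge0.
  assert (HBr : B < r).
  { unfold B. apply (Rmult_lt_reg_r (1 - kappa)); [lra|].
    replace (del / (1 - kappa) * (1 - kappa)) with del by (field; lra). lra. }
  assert (HB : del + kappa * B = B) by (unfold B; field; lra).
  induction k as [|k IH].
  - simpl. rewrite dist_xx. unfold B, Rdiv.
    apply Rmult_le_pos; [lra | left; apply Rinv_0_lt_compat; lra].
  - change (d c (g (Nat.iter k g c)) <= B).
    pose proof (dist_triangle c (g c) (g (Nat.iter k g c))). fold del in H.
    pose proof (Hcontr c (Nat.iter k g c) Hc ltac:(lra)). nra.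
Qed.

Lemma local_contraction_step c : K c -> d c (g c) < r ->
  forall k, d (Nat.iter k g c) (Nat.iter (S k) g c) <= kappa ^ k * d c (g c).
Proof.
  intros Hc Hdel k. induction k as [|k IH]; [simpl; lra|].
  assert (HK : K (Nat.iter k g c)) by (clear IH; induction k; simpl; auto).
  pose proof (dist_ge0 c (g c)). pose proof (pow_le kappa k ltac:(lra)).
  pose proof (pow_antimono kappa 0 k ltac:(lra) ltac:(lia)) as Hk1. simpl in Hk1.
  pose proof (Hcontr (Nat.iter k g c) (Nat.iter (S k) g c) HK ltac:(nra)).
  simpl in *. nra.
Qed.

Lemma local_fixed_point c : is_open d (fun x => ~ K x) -> K c ->
  d c (g c) < (1 - kappa) * r -> exists q, K q /\ g q = q /\ d c q < r.
Proof.
  intros HK Hc Hdel. pose proof (dist_ge0 c (g c)) as Hdel0.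
  assert (Hr : 0 < r) by nra.
  pose proof (local_contraction_orbit_bounded c Hc Hdel) as Hbounded.
  pose proof (local_contraction_step c Hc ltac:(nra)) as Hstep.
  set (del := d c (g c)) in *.
  assert (HBr : del / (1 - kappa) < r).
  { apply (Rmult_lt_reg_r (1 - kappa)); [lra|].
    replace (del / (1 - kappa) * (1 - kappa)) with del by (field; lra). lra. }
  set (s := fun k => Nat.iter k g c) in *.
  destruct (compact_cluster_point s) as [q Hq].
  assert (HKq : K q).
  { apply (cluster_point_closed K s q HK); [|exact Hq]. intros k. unfold s.
    induction k; simpl; auto. }
  assert (Hcq : d c q < r).
  { destruct (Hq (r - del / (1 - kappa)) ltac:(lra) 0%nat) as [j [_ Hj]].
    pose proof (dist_triangle c (s j) q). rewrite (dist_sym (s j) q) in H.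
    pose proof (Hbounded j) as Hb. change (Nat.iter j g c) with (s j) in Hb. lra. }
  exists q. split; [exact HKq|]. split; [|exact Hcq].
  apply dist_eq0. destruct (Rle_lt_or_eq_dec 0 _ (dist_ge0 (g q) q)) as [He|He]; [exfalso|auto].
  (* e = d(g q, q) <= d(g q, g s_j) + d(s_(j+1), s_j) + d(s_j, q) < 3e/4 for large j *)
  set (e := d (g q) q) in *.
  destruct (pow_mul_eventually_lt kappa del (e / 4)) as [k0 Hk0]; try lra.
  destruct (Hq (Rmin (e / 4) r) ltac:(apply Rmin_pos; lra) k0) as [j [Hj Hqj]].
  pose proof (Rmin_l (e / 4) r). pose proof (Rmin_r (e / 4) r).
  pose proof (Hcontr q (s j) HKq ltac:(lra)) as Hg.
  pose proof (Hstep j) as Hsj. change (Nat.iter (S j) g c) with (s (S j)) in Hsj.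
  change (Nat.iter j g c) with (s j) in Hsj. specialize (Hk0 j Hj).
  pose proof (dist_triangle (g q) (s (S j)) q).
  pose proof (dist_triangle (s (S j)) (s j) q).
  pose proof (dist_ge0 q (s j)).
  rewrite (dist_sym (s (S j)) (s j)), (dist_sym (s j) q) in *.
  change (s (S j)) with (g (s j)) in *. unfold e in *. nra.
Qed.

End LocalContraction.

Section Dynamics.
Variable f : X -> X.

Lemma iter_period_mul q p k : Nat.iter p f q = q -> Nat.iter (k * p) f q = q.
Proof.
  intros Hq. induction k as [|k IH]; [reflexivity|].
  replace (S k * p)%nat with (p + k * p)%nat by lia. rewrite Nat.iter_add, IH. exact Hq.
Qed.

Lemma iter_period_mod q p t : (p <> 0)%nat -> Nat.iter p f q = q ->
  Nat.iter t f q = Nat.iter (t mod p) f q.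
Proof.
  intros Hp Hq. transitivity (Nat.iter (t mod p + t / p * p) f q).
  - f_equal. pose proof (Nat.div_mod_eq t p). lia.
  - rewrite Nat.iter_add, iter_period_mul; auto.
Qed.

Lemma omega_lim_asymptotic_periodic (x q : X) (p M : nat) :
  (1 <= p)%nat -> Nat.iter p f q = q ->
  (forall eps, 0 < eps -> exists T, forall t, (T <= t)%nat ->
     d (Nat.iter t f q) (Nat.iter (M + t) f x) < eps) ->
  forall w, omega_lim d f x w <-> exists k, w = Nat.iter k f q.
Proof.
  intros Hp Hq Hconv w. split.
  - intros Hw. apply NNPP; intro Hnot.
    destruct (finite_positive_min (fun k => d w (Nat.iter k f q)) p) as [m [Hm Hmin]].
    { intros k _. destruct (Rle_lt_or_eq_dec 0 _ (dist_ge0 w (Nat.iter k f q))) as [H|H]; auto.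
      exfalso. apply Hnot. exists k. apply dist_eq0. auto. }
    destruct (Hconv (m / 2) ltac:(lra)) as [T HT].
    destruct (Hw (M + T)%nat (m / 2) ltac:(lra)) as [z [[n [Hn ->]] Hwz]].
    replace n with (M + (n - M))%nat in Hwz by lia.
    specialize (HT (n - M)%nat ltac:(lia)).
    rewrite (iter_period_mod q p) in HT by (lia || auto).
    specialize (Hmin ((n - M) mod p)%nat (Nat.mod_upper_bound (n - M) p ltac:(lia))).
    pose proof (dist_triangle w (Nat.iter (M + (n - M)) f x) (Nat.iter ((n - M) mod p) f q)).
    rewrite (dist_sym (Nat.iter (M + (n - M)) f x)) in H. cbv beta in Hmin. lra.
  - intros [k ->] m eps He. destruct (Hconv eps He) as [T HT].
    set (t := (k + (m + T) * p)%nat).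
    exists (Nat.iter (M + t) f x). split.
    + exists (M + t)%nat. split; [unfold t; nia | reflexivity].
    + specialize (HT t ltac:(unfold t; nia)).
      unfold t in HT at 1. rewrite Nat.iter_add, iter_period_mul in HT by exact Hq. exact HT.
Qed.

Section Pieces.
Variables (lam : R) (N : nat) (A : nat -> X -> Prop) (phi : nat -> X -> X).
Hypothesis Hlam : 0 < lam < 1.
Hypothesis Hpw : piecewise_contraction d lam f N A phi.

Lemma piece_open i : (i < N)%nat -> is_open d (A i).
Proof. destruct Hpw as (H & _). apply H. Qed.

Lemma phi_lipschitz i x y : (i < N)%nat -> d (phi i x) (phi i y) <= lam * d x y.
Proof. destruct Hpw as (_ & _ & _ & H & _). intros Hi. apply (H i Hi). Qed.

Lemma f_eq_phi i x : (i < N)%nat -> A i x -> f x = phi i x.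
Proof. destruct Hpw as (_ & _ & _ & _ & H). apply H. Qed.

Definition is_itinerary (al : list nat) (x : X) : Prop :=
  forall j, (j < length al)%nat -> (nth j al 0 < N)%nat /\ A (nth j al 0%nat) (Nat.iter j f x).

Lemma itinerary_cons i al x : is_itinerary (i :: al) x ->
  (i < N)%nat /\ A i x /\ is_itinerary al (f x).
Proof.
  intros H. destruct (H 0%nat) as [Hi HA]; [simpl; lia|]. split; [exact Hi | split; [exact HA|]].
  intros j Hj. rewrite <- Nat.iter_succ_r. apply (H (S j)). simpl. lia.
Qed.

Lemma itinerary_snoc al i x : is_itinerary al x -> (i < N)%nat ->
  A i (Nat.iter (length al) f x) -> is_itinerary (al ++ i :: nil) x.
Proof.
  intros Hal Hi HA j Hj. rewrite length_app in Hj. simpl in Hj.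
  destruct (Nat.eq_dec j (length al)) as [->|Hne].
  - rewrite app_nth2, Nat.sub_diag by lia. simpl. auto.
  - rewrite app_nth1 by lia. apply Hal. lia.
Qed.

Lemma iter_itinerary al x : is_itinerary al x -> Nat.iter (length al) f x = phi_alpha phi al x.
Proof.
  revert x. induction al as [|i al IH]; intros x Hal; [reflexivity|].
  destruct (itinerary_cons i al x Hal) as (Hi & HA & Hal').
  cbn [length]. rewrite Nat.iter_succ_r, IH by exact Hal'.
  rewrite (f_eq_phi i x Hi HA). reflexivity.
Qed.

Lemma phi_alpha_lipschitz al x y : Forall (fun i => (i < N)%nat) al ->
  d (phi_alpha phi al x) (phi_alpha phi al y) <= lam ^ length al * d x y.
Proof.
  intros Hal. revert x y. induction Hal as [|i al Hi Hal IH]; intros x y.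
  - simpl. lra.
  - change (d (phi_alpha phi al (phi i x)) (phi_alpha phi al (phi i y))
              <= lam * lam ^ length al * d x y).
    eapply Rle_trans; [apply IH|].
    pose proof (phi_lipschitz i x y Hi). pose proof (pow_le lam (length al) ltac:(lra)). nra.
Qed.

Lemma itinerary_orbit_lipschitz al x y : is_itinerary al x ->
  d (Nat.iter (length al) f x) (phi_alpha phi al y) <= lam ^ length al * d x y.
Proof.
  intros Hal. rewrite (iter_itinerary al x Hal). apply phi_alpha_lipschitz.
  apply Forall_nth. intros j z Hj. rewrite (nth_indep al z 0%nat Hj). apply Hal, Hj.
Qed.

Lemma regular_itinerary n x : regular_order f N A n x ->
  exists al, length al = n /\ is_itinerary al x.
Proof.
  induction n as [|n IH]; intros Hx.
  - exists nil. split; [reflexivity | intros j Hj; simpl in Hj; lia].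
  - destruct IH as [al [Hlen Hal]]; [intros j Hj; apply Hx; lia|].
    assert (Hn : Xprime N A (Nat.iter n f x)) by (apply NNPP, (Hx n); lia).
    destruct Hn as [i [Hi HA]]. exists (al ++ i :: nil). split.
    + rewrite length_app, Hlen. simpl. lia.
    + apply itinerary_snoc; [exact Hal | exact Hi | rewrite Hlen; exact HA].
Qed.

Lemma admissible_of_itinerary al x : regular_order f N A (length al) x ->
  is_itinerary al x -> In_f f N A (length al) al.
Proof. intros Hx Hal. split; [reflexivity|]. exists x. split; assumption. Qed.

Lemma admissible_snoc al i x : regular_order f N A (length al) x -> is_itinerary al x ->
  (i < N)%nat -> A i (Nat.iter (length al) f x) ->
  In_f f N A (S (length al)) (al ++ i :: nil).
Proof.
  intros Hx Hal Hi HA.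
  assert (Hlen : length (al ++ i :: nil) = S (length al)) by (rewrite length_app; simpl; lia).
  rewrite <- Hlen. apply admissible_of_itinerary with x; [|apply itinerary_snoc; assumption].
  rewrite Hlen. intros j Hj. destruct (Nat.eq_dec j (length al)) as [->|Hne].
  - intros HS. apply HS. exists i. split; assumption.
  - apply Hx. lia.
Qed.

Section Omega.
Variable x0 : X.
Hypothesis HOmega : forall y, Omega d f N A phi x0 y -> Sf N A y -> False.
Local Notation Om := (Omega d f N A phi x0).

Lemma Omega_compl_open : is_open d (fun y => ~ Om y).
Proof.
  exact (closures_cap_closed (fun m z => exists n alpha,
           (m <= n)%nat /\ In_f f N A n alpha /\ z = phi_alpha phi alpha x0)).
Qed.

Lemma regular_near_admissible n x : regular_order f N A n x ->
  exists al, In_f f N A n al /\ d (Nat.iter n f x) (phi_alpha phi al x0) <= lam ^ n * d x x0.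
Proof.
  intros Hx. destruct (regular_itinerary n x Hx) as [al [<- Hal]].
  exists al. split; [apply admissible_of_itinerary with x; assumption|].
  apply itinerary_orbit_lipschitz, Hal.
Qed.

Lemma regular_orbit_clusters_in_Omega x : Zf f N A x ->
  exists y, Om y /\ cluster_point (fun n => Nat.iter n f x) y.
Proof.
  intros Hx. destruct (compact_cluster_point (fun n => Nat.iter n f x)) as [y Hy].
  exists y. split; [|exact Hy]. intros m eps He.
  destruct (pow_mul_eventually_lt lam (d x x0) (eps / 2)) as [T HT];
    [lra | apply dist_ge0 | lra |].
  destruct (Hy (eps / 2) ltac:(lra) (max m T)) as [n [Hn Hyn]]. cbv beta in Hyn.
  destruct (regular_near_admissible n x (Hx n)) as [al [Hal Hnear]].
  exists (phi_alpha phi al x0). split.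
  - exists n, al. split; [lia | split; [exact Hal | reflexivity]].
  - specialize (HT n ltac:(lia)).
    pose proof (dist_triangle y (Nat.iter n f x) (phi_alpha phi al x0)). lra.
Qed.

Lemma Omega_lebesgue : exists r, 0 < r /\
  forall y, Om y -> exists i, (i < N)%nat /\ forall z, d y z < r -> A i z.
Proof.
  destruct (lebesgue_number Om (fun i z => (i < N)%nat /\ A i z)) as [r [Hr Hleb]].
  - exact Omega_compl_open.
  - intros i z [Hi Hz]. destruct (piece_open i Hi z Hz) as [rho [Hrho Hball]].
    exists rho. split; [exact Hrho|]. intros w Hw. split; auto.
  - intros y Hy. apply NNPP. intro Hno. apply (HOmega y Hy).
    intros [i Hi]. apply Hno. exists i. exact Hi.
  - exists r. split; [exact Hr|]. intros y Hy. destruct (Hleb y Hy) as [i Hi].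
    exists i. split; [apply (Hi y); rewrite dist_xx; exact Hr|].
    intros z Hz. apply Hi, Hz.
Qed.

Section Attraction.
Variables (r D : R).
Hypothesis Hr : 0 < r.
Hypothesis Hleb : forall y, Om y -> exists i, (i < N)%nat /\ forall z, d y z < r -> A i z.
Hypothesis HD : forall x, d x x0 <= D.

Lemma Omega_f_invariant y : Om y -> Om (f y).
Proof.
  intros Hy. destruct (Hleb y Hy) as [i [Hi HA]].
  assert (HD0 : 0 <= D) by (pose proof (HD x0); rewrite dist_xx in *; lra).
  intros m eps He.
  destruct (pow_mul_eventually_lt lam (D + 1) (r / 2)) as [T HT]; [lra | lra | lra |].
  destruct (Hy (max m T) (Rmin (r / 2) eps) ltac:(apply Rmin_pos; lra))
    as [z [[n [al [Hn [[Hlen [x [Hreg Hal]]] ->]]]] Hyz]].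
  subst n. pose proof (Rmin_l (r / 2) eps). pose proof (Rmin_r (r / 2) eps).
  assert (Hnear : d (Nat.iter (length al) f x) (phi_alpha phi al x0) < r / 2).
  { pose proof (itinerary_orbit_lipschitz al x x0 Hal). specialize (HT (length al) ltac:(lia)).
    pose proof (HD x). pose proof (pow_le lam (length al) ltac:(lra)). nra. }
  assert (Hxi : A i (Nat.iter (length al) f x)).
  { apply HA. pose proof (dist_triangle y (phi_alpha phi al x0) (Nat.iter (length al) f x)).
    rewrite (dist_sym (phi_alpha phi al x0)) in H1. lra. }
  exists (phi i (phi_alpha phi al x0)). split.
  - exists (S (length al)), (al ++ i :: nil). split; [lia|]. split.
    + apply admissible_snoc with x; assumption.
    + unfold phi_alpha. rewrite fold_left_app. reflexivity.
  - rewrite (f_eq_phi i y Hi) by (apply HA; rewrite dist_xx; exact Hr).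
    pose proof (phi_lipschitz i y (phi_alpha phi al x0) Hi).
    pose proof (dist_ge0 y (phi_alpha phi al x0)). nra.
Qed.

Lemma Omega_iter_invariant j y : Om y -> Om (Nat.iter j f y).
Proof. intros Hy. induction j as [|j IH]; [exact Hy | apply Omega_f_invariant, IH]. Qed.

Lemma f_contract_near_Omega y z : Om y -> d y z < r -> d (f y) (f z) <= lam * d y z.
Proof.
  intros Hy Hyz. destruct (Hleb y Hy) as [i [Hi HA]].
  rewrite (f_eq_phi i y Hi), (f_eq_phi i z Hi) by (apply HA; auto; rewrite dist_xx; exact Hr).
  apply phi_lipschitz, Hi.
Qed.

Lemma iter_contract_near_Omega j y z : Om y -> d y z < r ->
  d (Nat.iter j f y) (Nat.iter j f z) <= lam ^ j * d y z.
Proof.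
  revert y z. induction j as [|j IH]; intros y z Hy Hyz; [simpl; lra|].
  pose proof (f_contract_near_Omega y z Hy Hyz). pose proof (dist_ge0 y z).
  rewrite !Nat.iter_succ_r.
  eapply Rle_trans; [apply IH; [apply Omega_f_invariant, Hy | nra]|].
  pose proof (pow_le lam j ltac:(lra)). simpl. nra.
Qed.

Lemma periodic_point_near_Omega y : Om y ->
  exists j p q, (1 <= p)%nat /\ Om q /\ Nat.iter p f q = q /\ d (Nat.iter j f y) q < r.
Proof.
  intros Hy.
  destruct (compact_recurrence (fun j => Nat.iter j f y) ((1 - lam) * r)) as [j [p [Hp Hjp]]].
  { nra. }
  cbv beta in Hjp. rewrite Nat.add_comm, Nat.iter_add in Hjp.
  pose proof (pow_lt_1_compat lam p ltac:(lra) ltac:(lia)) as Hlamp.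
  pose proof (pow_antimono lam 1 p ltac:(lra) Hp) as Hlamp1. simpl in Hlamp1.
  destruct (local_fixed_point Om (Nat.iter p f) (lam ^ p) r Hlamp
              (fun z Hz => Omega_iter_invariant p z Hz)
              (fun z w Hz Hzw => iter_contract_near_Omega p z w Hz Hzw)
              (Nat.iter j f y) Omega_compl_open (Omega_iter_invariant j y Hy) ltac:(nra))
    as [q [Hq [Hqp Hjq]]].
  exists j, p, q. auto.
Qed.

Lemma regular_asymptotically_periodic x : Zf f N A x ->
  exists q p M, Om q /\ (1 <= p)%nat /\ Nat.iter p f q = q /\
    forall eps, 0 < eps -> exists T, forall t, (T <= t)%nat ->
      d (Nat.iter t f q) (Nat.iter (M + t) f x) < eps.
Proof.
  intros Hx. destruct (regular_orbit_clusters_in_Omega x Hx) as [y [Hy Hcl]].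
  destruct (Hcl r Hr 0%nat) as [n0 [_ Hn0]]. cbv beta in Hn0.
  destruct (periodic_point_near_Omega y Hy) as [j [p [q [Hp [Hq [Hqp Hjq]]]]]].
  exists q, p, (j + n0)%nat. split; [exact Hq | split; [exact Hp | split; [exact Hqp|]]].
  assert (Hbound : forall t, d (Nat.iter t f q) (Nat.iter (j + n0 + t) f x) <= lam ^ t * (2 * r)).
  { intros t. rewrite dist_sym in Hjq.
    pose proof (iter_contract_near_Omega t q (Nat.iter j f y) Hq Hjq) as Hqy.
    pose proof (iter_contract_near_Omega (t + j) y (Nat.iter n0 f x) Hy Hn0) as Hyx.
    rewrite <- Nat.iter_add in Hqy. rewrite <- Nat.iter_add in Hyx.
    replace (t + j + n0)%nat with (j + n0 + t)%nat in Hyx by lia.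
    pose proof (dist_triangle (Nat.iter t f q) (Nat.iter (t + j) f y) (Nat.iter (j + n0 + t) f x)).
    pose proof (pow_antimono lam t (t + j) ltac:(lra) ltac:(lia)).
    pose proof (pow_le lam (t + j) ltac:(lra)).
    pose proof (dist_ge0 q (Nat.iter j f y)). pose proof (dist_ge0 y (Nat.iter n0 f x)).
    nra. }
  intros eps He. destruct (pow_mul_eventually_lt lam (2 * r) eps) as [T HT]; [lra | lra | lra |].
  exists T. intros t Ht. specialize (Hbound t). specialize (HT t Ht). lra.
Qed.

Lemma periodic_eq_near_Omega q1 q2 p1 p2 : Om q1 ->
  (1 <= p1)%nat -> Nat.iter p1 f q1 = q1 -> (1 <= p2)%nat -> Nat.iter p2 f q2 = q2 ->
  d q1 q2 < r -> q1 = q2.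
Proof.
  intros Hq1 Hp1 E1 Hp2 E2 Hd.
  pose proof (iter_contract_near_Omega (p2 * p1) q1 q2 Hq1 Hd) as H.
  rewrite (iter_period_mul q1 p1 p2 E1), Nat.mul_comm, (iter_period_mul q2 p2 p1 E2) in H.
  pose proof (pow_lt_1_compat lam (p1 * p2) ltac:(lra) ltac:(nia)).
  pose proof (dist_ge0 q1 q2). apply dist_eq0. nra.
Qed.

Lemma asymptotically_periodic_regular : asymptotically_periodic_on d f (Zf f N A).
Proof.
  set (attracting q := Om q /\ (exists p, (1 <= p)%nat /\ Nat.iter p f q = q) /\
         exists x, Zf f N A x /\ forall w, omega_lim d f x w <-> exists k, w = Nat.iter k f q).
  destruct (finite_of_separated attracting r Hr) as [ps [Hps Hall]].
  { intros q1 q2 (Hq1 & [p1 [Hp1 E1]] & _) (_ & [p2 [Hp2 E2]] & _).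
    apply periodic_eq_near_Omega with p1 p2; assumption. }
  exists ps. split.
  - intros p Hp. apply Hps in Hp as (_ & Hper & _). exact Hper.
  - intros w. split.
    + intros [x [Hx Hw]].
      destruct (regular_asymptotically_periodic x Hx) as [q [p [M [Hq [Hp [Hqp Hconv]]]]]].
      pose proof (omega_lim_asymptotic_periodic x q p M Hp Hqp Hconv) as Hiff.
      destruct (proj1 (Hiff w) Hw) as [k ->].
      exists q, k. split; [|reflexivity]. apply Hall.
      split; [exact Hq | split; [eauto | exists x; auto]].
    + intros [p [k [Hin ->]]]. destruct (Hps p Hin) as (_ & _ & x & Hx & Hiff).
      exists x. split; [exact Hx | apply Hiff; eauto].
Qed.

End Attraction.
End Omega.
End Pieces.
End Dynamics.
End CompactMetric.

Theorem lemma3p7 (X : Type) (d : X -> X -> R) (lam : R)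
  (Hmetric : is_metric d) (Hcompact : compact_space d)
  (Hballs : forall x r, 0 < r -> connected d (ball d x r))
  (Hdiam : diam_pos d) (Hlam : 0 < lam < 1)
  (f : X -> X) (N : nat) (A : nat -> X -> Prop) (phi : nat -> X -> X)
  (Hpw : piecewise_contraction d lam f N A phi) (x0 : X)
  (HOmega : forall y, Omega d f N A phi x0 y -> Sf N A y -> False) :
  asymptotically_periodic_on d f (Zf f N A).
Proof.
  destruct (Omega_lebesgue X d Hmetric Hcompact f lam N A phi Hpw x0 HOmega) as [r [Hr Hleb]].
  destruct (compact_bounded X d Hmetric Hcompact x0) as [D HD].
  exact (asymptotically_periodic_regular X d Hmetric Hcompact f lam N A phi Hlam Hpw
           x0 r D Hr Hleb HD).
Qed.
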